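(* Let $\ell\ge2$. In $CK(2,\ell)$ there is a directed path from a vertex $u$ to a vertex $v$ if and only if the imprint of $v$ contains the same number of $+$ signs and the same number of $-$ signs as the imprint of $u$.
   Context: $CK(2,\ell)$ has as vertices all sequences $a_1\ldots a_\ell\in\{0,1,2\}^\ell$ with $a_i\neq a_{i+1}$ for $1\le i\le\ell-1$ and $a_1\ne a_\ell$, and an arc from $a_1\ldots a_\ell$ to $b_1\ldots b_\ell$ iff both are vertices and $b_i=a_{i+1}$ for $1\le i\le \ell-1$. For distinct $a,b\in\{0,1,2\}$ define $sgn(0,1)=sgn(1,2)=sgn(2,0)=+$ and $sgn(1,0)=sgn(2,1)=sgn(0,2)=-$. The imprint of $v=v_1\ldots v_\ell$ is $im(v)=(sgn(v_1,v_2),\dots,sgn(v_{\ell-1},v_\ell),sgn(v_\ell,v_1))$. *)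

From mathcomp Require Import all_boot.
Set Implicit Arguments. Unset Strict Implicit. Unset Printing Implicit Defensive.

(* Symbols {0,1,2} are 'I_3; words a_1...a_l are l.-tuples, a_i = tnth a (i-1). *)

Definition ck_vertex (l : nat) (a : l.-tuple 'I_3) : bool :=
  [forall i : 'I_l, (i.+1 < l) ==> (nth ord0 a i != nth ord0 a i.+1)]
  && (nth ord0 a 0 != nth ord0 a l.-1).

Definition ck_arc (l : nat) : rel (l.-tuple 'I_3) :=
  fun a b => [&& ck_vertex a, ck_vertex b &
     [forall i : 'I_l, (i.+1 < l) ==> (nth ord0 b i == nth ord0 a i.+1)]].

(* sgn(x,y) = + (true) iff y = x+1 mod 3, i.e. (0,1),(1,2),(2,0);
   for distinct x,y the other case is - (false). *)
Definition sgn (x y : 'I_3) : bool := (val y == (val x).+1 %% 3).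

Definition imprint (l : nat) (v : l.-tuple 'I_3) : seq bool :=
  [seq sgn (nth ord0 v i) (nth ord0 v ((i.+1) %% l)) | i <- iota 0 l].

Definition nplus (s : seq bool) : nat := count id s.
Definition nminus (s : seq bool) : nat := count negb s.

From mathcomp Require Import all_boot zify.
Set Implicit Arguments. Unset Strict Implicit. Unset Printing Implicit Defensive.

(* A vertex is determined by its first letter x and its imprint: the letters are
   x, x +- 1, ... mod 3, and a sign sequence closes up iff #(+) + 2 #(-) = 0 mod 3.
   An arc drops the first letter and appends a new one; up to rotation it
   recolours a single letter, which changes the two signs around that letter but
   not their sum, so the numbers of + and - are invariant.  Conversely arcs
   realise every rotation and every recolouring of a vertex.  Recolouring the
   letter between two different signs swaps them, so the imprint can be sorted;
   rotating by one position moves the first letter one step, so it can be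
   chosen freely. *)

Variant ord3_spec : 'I_3 -> Type :=
  | Ord3_0 : ord3_spec (@Ordinal 3 0 isT)
  | Ord3_1 : ord3_spec (@Ordinal 3 1 isT)
  | Ord3_2 : ord3_spec (@Ordinal 3 2 isT).

Lemma ord3P x : ord3_spec x.
Proof.
case: x => -[|[|[|n]]] // hn; rewrite (bool_irrelevance hn isT); constructor.
Qed.

Definition step (x : 'I_3) (b : bool) : 'I_3 := if b then ordS x else ord_pred x.

Lemma sgn_step x b : sgn x (step x b) = b.
Proof. by case: b; case: (ord3P x). Qed.

Lemma step_sgn x y : x != y -> step x (sgn x y) = y.
Proof. by case: (ord3P x); case: (ord3P y) => // _; apply/eqP. Qed.

Lemma stepK y a b : a != b -> step (step y a) b = y.
Proof. by case: a; case: b => // _; case: (ord3P y); apply/eqP. Qed.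

Lemma step_neq x b : x != step x b.
Proof. by case: b; case: (ord3P x). Qed.

Lemma step_cases x y b : [|| y == x, y == step x b | y == step (step x b) b].
Proof. by case: b; case: (ord3P x); case: (ord3P y). Qed.

Lemma sgn_detour x y z w : x != y -> y != z -> x != w -> w != z ->
  sgn x y + sgn y z = sgn x w + sgn w z.
Proof. by case: (ord3P x); case: (ord3P y); case: (ord3P z); case: (ord3P w). Qed.

Definition ck_word (s : seq 'I_3) : bool := cycle (fun a b => a != b) s.

Definition signs (s : seq 'I_3) : seq bool :=
  if s is x :: r then pairmap sgn x (rcons r x) else [::].

Definition word (x : 'I_3) (ss : seq bool) : seq 'I_3 := belast x (scanl step x ss).

Definition zero_winding (ss : seq bool) : bool :=
  (count id ss + 2 * count negb ss) %% 3 == 0.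

Lemma size_word x ss : size (word x ss) = size ss.
Proof. by rewrite size_belast size_scanl. Qed.

Lemma val_foldl_step x ss :
  val (foldl step x ss) = (x + count id ss + 2 * count negb ss) %% 3.
Proof.
elim: ss x => [|b ss IH] x /=; first by rewrite !addn0 modn_small.
rewrite IH; case: b => /=; rewrite -!addnA ?modnDml; congr (_ %% 3); lia.
Qed.

Lemma foldl_step_id x ss : (foldl step x ss == x) = zero_winding ss.
Proof.
rewrite /zero_winding -val_eqE /= val_foldl_step -addnA.
have := ltn_ord x; lia.
Qed.

Lemma path_scanl_step x ss : path (fun a b => a != b) x (scanl step x ss).
Proof. by elim: ss x => //= b ss IH x; rewrite step_neq IH. Qed.

Lemma last_scanl_step x ss : last x (scanl step x ss) = foldl step x ss.
Proof. by elim: ss x => //= b ss IH x. Qed.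

Lemma ck_word_word x ss : zero_winding ss -> ck_word (word x ss).
Proof.
rewrite -(foldl_step_id x) -last_scanl_step => /eqP.
rewrite /ck_word /word; case: (scanl step x ss) (path_scanl_step x ss) => //= y p hp hl.
by rewrite -[X in rcons _ X]hl -lastI.
Qed.

Lemma scanl_step_pairmap x p :
  path (fun a b => a != b) x p -> scanl step x (pairmap sgn x p) = p.
Proof. by elim: p x => //= y p IH x /andP [hxy hp]; rewrite step_sgn // IH. Qed.

Lemma signsK s : ck_word s -> word (head ord0 s) (signs s) = s.
Proof.
by case: s => //= x r hc; rewrite /word scanl_step_pairmap // belast_rcons.
Qed.

Lemma zero_winding_signs s : ck_word s -> zero_winding (signs s).
Proof.
case: s => //= x r hc.
by rewrite -(foldl_step_id x) -last_scanl_step scanl_step_pairmap // last_rcons.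
Qed.

(* Reachability along arcs of CK(2,l), on plain sequences so that rotations and
   recolourings compose without length bookkeeping. *)
Inductive reach : seq 'I_3 -> seq 'I_3 -> Prop :=
| reach_refl s : reach s s
| reach_shift s w u : ck_word s -> ck_word (rcons (behead s) w) ->
    reach (rcons (behead s) w) u -> reach s u.

Lemma reach_trans s t u : reach s t -> reach t u -> reach s u.
Proof. by elim=> // {}s w {}t hs hw _ IH /IH; apply: reach_shift. Qed.

Lemma reach_rot s k : ck_word s -> k <= size s -> reach s (rot k s).
Proof.
move=> hs; elim: k => [|k IH] hk; first by rewrite rot0; apply: reach_refl.
apply: (reach_trans (IH (ltnW hk))).
have hsk : ck_word (rot k s) by rewrite /ck_word rot_cycle.
rewrite -[k.+1]add1n rotD //.
case: (rot k s) hsk => [|x r] hsk; first exact: reach_refl.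
rewrite rot1_cons; apply: (@reach_shift _ x) (reach_refl _) => //.
by rewrite /= -rot1_cons /ck_word rot_cycle.
Qed.

Lemma reach_recolor_head c c' r : ck_word (c :: r) -> ck_word (c' :: r) ->
  reach (c :: r) (c' :: r).
Proof.
move=> hc hc'; have hr : ck_word (rcons r c') by rewrite -rot1_cons /ck_word rot_cycle.
apply: (@reach_shift _ c') => //.
have := @reach_rot _ (size r) hr; rewrite size_rcons -cats1 rot_size_cat.
by apply.
Qed.

Lemma reach_sym s t : reach s t -> reach t s.
Proof.
elim=> [|{}s w u hs hw _ IH]; first exact: reach_refl.
apply: reach_trans IH _; case: s hs hw => [|x r] /= hs hw; first by rewrite /ck_word /= eqxx in hw.
have := @reach_rot _ (size r) hw; rewrite size_rcons -cats1 rot_size_cat /= => hrot.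
apply: reach_trans (hrot (leqnSn _)) _; apply: reach_recolor_head => //.
by rewrite /ck_word -(rot_cycle (size r)) -cats1 rot_size_cat in hw.
Qed.

Lemma reach_recolor p c c' q : ck_word (p ++ c :: q) -> ck_word (p ++ c' :: q) ->
  reach (p ++ c :: q) (p ++ c' :: q).
Proof.
move=> hc hc'; have rotE d : rot (size p) (p ++ d :: q) = d :: q ++ p.
  by rewrite rot_size_cat.
have hr d : ck_word (p ++ d :: q) -> ck_word (d :: q ++ p).
  by rewrite -rotE /ck_word rot_cycle.
have hrot d : ck_word (p ++ d :: q) -> reach (p ++ d :: q) (d :: q ++ p).
  by move=> hd; rewrite -rotE; apply: reach_rot; rewrite // size_cat leq_addr.
apply: reach_trans (hrot _ hc) _; apply: reach_trans (reach_sym (hrot _ hc')).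
exact: reach_recolor_head (hr _ hc) (hr _ hc').
Qed.

Lemma zero_winding_perm s t : perm_eq s t -> zero_winding s -> zero_winding t.
Proof. by move=> /permP hst; rewrite /zero_winding !hst. Qed.

Lemma belast_cat2 (T : Type) (x c d : T) p q :
  belast x (p ++ c :: d :: q) = (x :: p) ++ c :: belast d q.
Proof. by elim: p x => //= y p IH x; rewrite IH. Qed.

Lemma reach_swap x p a b q : zero_winding (p ++ a :: b :: q) ->
  reach (word x (p ++ a :: b :: q)) (word x (p ++ b :: a :: q)).
Proof.
have [-> _|neq_ab hab] := eqVneq a b; first exact: reach_refl.
have hba : zero_winding (p ++ b :: a :: q).
  by apply: zero_winding_perm hab; rewrite perm_cat2l (perm_catCA [:: a] [:: b] q).
have := ck_word_word x hab; have := ck_word_word x hba.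
rewrite /word !scanl_cat /= (stepK _ neq_ab) (stepK _ (b := a)) 1?eq_sym //.
by rewrite !belast_cat2 => hb ha; apply: reach_recolor.
Qed.

Lemma reach_bubble x p n q : zero_winding (p ++ false :: nseq n true ++ q) ->
  reach (word x (p ++ false :: nseq n true ++ q)) (word x (p ++ nseq n true ++ false :: q)).
Proof.
elim: n p => [|n IH] p hw; first exact: reach_refl.
apply: reach_trans (reach_swap x hw) _.
rewrite -cat_rcons -[p ++ true :: _]cat_rcons; apply: IH.
rewrite cat_rcons; apply: zero_winding_perm hw.
by rewrite perm_cat2l (perm_catCA [:: false] [:: true]).
Qed.

Definition sorted_signs (ss : seq bool) : seq bool :=
  nseq (count id ss) true ++ nseq (count negb ss) false.

Lemma perm_sorted_signs ss : perm_eq (sorted_signs ss) ss.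
Proof.
elim: ss => //= b ss IH; rewrite /sorted_signs; case: b => /=; first by rewrite perm_cons.
by rewrite !add0n (perm_catCA (nseq (count id ss) true) [:: false]) perm_cons.
Qed.

Lemma reach_sorted_signs x p ss : zero_winding (p ++ ss) ->
  reach (word x (p ++ ss)) (word x (p ++ sorted_signs ss)).
Proof.
elim: ss p => [|b ss IH] p hw; first exact: reach_refl.
have := IH (rcons p b); rewrite !cat_rcons => /(_ hw) {}IH; apply: reach_trans IH _.
rewrite /sorted_signs; case: b hw => /= hw; first exact: reach_refl.
rewrite !add0n; apply: reach_bubble; apply: zero_winding_perm hw.
by rewrite perm_cat2l perm_cons perm_sym; apply: perm_sorted_signs.
Qed.

Lemma perm_eq_counts (s t : seq bool) :
  count id s = count id t -> count negb s = count negb t -> perm_eq s t.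
Proof.
move=> h1 h2; apply: perm_trans (perm_sorted_signs t).
by rewrite perm_sym /sorted_signs -h1 -h2 perm_sorted_signs.
Qed.

Lemma reach_perm x s t : zero_winding s -> perm_eq s t -> reach (word x s) (word x t).
Proof.
move=> hs hst; have ht := zero_winding_perm hst hs.
have sortedE : sorted_signs s = sorted_signs t by rewrite /sorted_signs !(permP hst).
apply: reach_trans (reach_sorted_signs x (p := [::]) hs) _.
by rewrite sortedE; apply: reach_sym (reach_sorted_signs x (p := [::]) ht).
Qed.

Lemma rot1_word x b ss : zero_winding (b :: ss) ->
  rot 1 (word x (b :: ss)) = word (step x b) (rcons ss b).
Proof.
rewrite -(foldl_step_id x) /= => /eqP hx.
rewrite /word /= rot1_cons scanl_rcons foldl_rcons hx belast_rcons.
by rewrite -[X in rcons _ X]hx -last_scanl_step -lastI.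
Qed.

Lemma reach_word_step x b ss : zero_winding (b :: ss) ->
  reach (word x (b :: ss)) (word (step x b) (b :: ss)).
Proof.
move=> hw; have hr : ck_word (word x (b :: ss)) := ck_word_word x hw.
apply: reach_trans (reach_rot hr (_ : 1 <= _)) _; first by rewrite size_word.
rewrite rot1_word //; apply: reach_perm; last by rewrite perm_rcons.
by apply: zero_winding_perm hw; rewrite perm_sym perm_rcons.
Qed.

Lemma reach_word_head x y ss : zero_winding ss -> reach (word x ss) (word y ss).
Proof.
case: ss => [_|b ss hw]; first exact: reach_refl.
have hxb := reach_word_step x hw; have hbb := reach_word_step (step x b) hw.
case/or3P: (step_cases x y b) => /eqP ->; first exact: reach_refl.
- exact: hxb.
- exact: reach_trans hxb hbb.
Qed.

Lemma reach_signs s t :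
  ck_word s -> ck_word t -> perm_eq (signs s) (signs t) -> reach s t.
Proof.
move=> hs ht hst; rewrite -(signsK hs) -(signsK ht).
apply: reach_trans (reach_perm _ (zero_winding_signs hs) hst) _.
exact: reach_word_head (zero_winding_signs ht).
Qed.

Lemma perm_pair_sum (a b c d : bool) : a + b = c + d -> perm_eq [:: a; b] [:: c; d].
Proof. by case: a; case: b; case: c; case: d. Qed.

Lemma perm_signs_shift s w : ck_word s -> ck_word (rcons (behead s) w) ->
  perm_eq (signs (rcons (behead s) w)) (signs s).
Proof.
case: s => [|y [|z r]] /=; rewrite /ck_word //= ?eqxx ?andbF //.
rewrite !rcons_path last_rcons => /and3P [hyz _ hxy] /andP [/andP [_ hxw] hwz].
rewrite -!cats1 !pairmap_cat /= last_cat /= perm_sym -cat1s.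
rewrite (perm_catCA [:: sgn y z]) -catA perm_cat2l; apply: perm_pair_sum.
by rewrite addnC; apply: sgn_detour.
Qed.

Lemma ck_vertex_word l (a : l.-tuple 'I_3) : 0 < l -> ck_vertex a = ck_word a.
Proof.
rewrite /ck_vertex /ck_word; case: a => s /= /eqP hs; subst l.
case: s => [|x r] //= _; rewrite rcons_path.
have -> : [forall i : 'I_(size r).+1, (i.+1 < (size r).+1) ==>
           (nth ord0 (x :: r) i != nth ord0 (x :: r) i.+1)]
          = path (fun a b => a != b) x r.
  apply/forallP/(pathP ord0) => [h i hi | h [i hi]] /=.
    by have /implyP := h (Ordinal (leqW hi)); apply.
  by apply/implyP => /h.
by rewrite nth_last /= eq_sym.
Qed.

Lemma imprint_signs l (a : l.-tuple 'I_3) : imprint a = signs a.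
Proof.
rewrite /imprint; case: a => s /= /eqP hs; subst l; case: s => [|x r] //.
apply: (@eq_from_nth _ false); first by rewrite size_map size_iota size_pairmap size_rcons.
move=> i; rewrite size_map size_iota ltnS => hi.
rewrite (nth_map 0) ?size_iota ?ltnS // nth_iota ?ltnS // add0n.
rewrite (nth_pairmap ord0) ?size_rcons ?ltnS // -rcons_cons nth_rcons /= ltnS hi.
congr sgn; rewrite nth_rcons; case: ltngtP hi => // [lt_ir _ | -> _].
  by rewrite modn_small.
by rewrite modnn.
Qed.

Lemma shift_tupleP l (a b : l.-tuple 'I_3) : 0 < l ->
  reflect (exists w, val b = rcons (behead a) w)
          [forall i : 'I_l, (i.+1 < l) ==> (nth ord0 b i == nth ord0 a i.+1)].
Proof.
move=> hl; have size_behead_a : size (behead a) = l.-1 by rewrite size_behead size_tuple.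
apply: (iffP forallP) => [h | [w ->] i].
  exists (nth ord0 b l.-1); apply: (@eq_from_nth _ ord0).
    by rewrite size_rcons size_behead_a size_tuple prednK.
  move=> i; rewrite size_tuple => hi; rewrite nth_rcons size_behead_a nth_behead.
  case: ltngtP => [lt_il | gt_il | ->] //; last by exfalso; lia.
  by have /implyP/(_ _)/eqP := h (Ordinal hi); apply => /=; lia.
apply/implyP => lt_il; rewrite nth_rcons size_behead_a nth_behead.
by have -> : i < l.-1 by lia.
Qed.

Lemma ck_arcP l (a b : l.-tuple 'I_3) : 0 < l ->
  reflect [/\ ck_word a, ck_word b & exists w, val b = rcons (behead a) w] (ck_arc a b).
Proof.
move=> hl; rewrite /ck_arc !ck_vertex_word //.
by apply: (iffP and3P) => -[ha hb /(shift_tupleP a b hl) h].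
Qed.

Lemma connect_reach l (u v : l.-tuple 'I_3) : 0 < l -> reach u v -> connect (@ck_arc l) u v.
Proof.
move=> hl; move hu: (val u) => s; move hv: (val v) => t h.
elim: h u hu hv => [{}s | {}s w {}t hs hw _ IH] u hu hv.
  by rewrite (val_inj (etrans hu (esym hv))) connect0.
have size_shift : size (rcons (behead s) w) == l.
  by rewrite size_rcons size_behead -hu size_tuple prednK.
apply: connect_trans (connect1 _) (IH (Tuple size_shift) (erefl _) hv).
by apply/ck_arcP => //; rewrite hu; split => //; exists w.
Qed.

Lemma connect_perm_signs l (u v : l.-tuple 'I_3) : 0 < l ->
  connect (@ck_arc l) u v -> perm_eq (signs v) (signs u).
Proof.
move=> hl /connectP [p]; elim: p u => [|b p IH] u /=; first by move=> _ ->.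
case/andP => /(ck_arcP _ _ hl) [ha hb [w hw]] hp hv.
by apply: perm_trans (IH _ hp hv) _; rewrite hw perm_signs_shift // -hw.
Qed.

Theorem lemma5 (l : nat) (hl : 2 <= l) (u v : l.-tuple 'I_3) :
  ck_vertex u -> ck_vertex v ->
  (connect (@ck_arc l) u v <->
   (nplus (imprint v) = nplus (imprint u) /\ nminus (imprint v) = nminus (imprint u))).
Proof.
have l_gt0 : 0 < l by apply: ltnW.
rewrite /nplus /nminus !imprint_signs !ck_vertex_word // => hu hv; split.
  by move/(connect_perm_signs l_gt0)/permP => h; rewrite !h.
case=> h_plus h_minus; apply: connect_reach l_gt0 _; apply: reach_signs => //.
exact: perm_eq_counts.
Qed.
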